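(* Equip $\mathfrak{M}$ with the inverse lexicographic term order determined by the total order $x_{1,2}>x_{1,3}>\cdots>x_{1,n}>x_{2,3}>x_{2,4}>\cdots>x_{2,n}>\cdots>x_{n-1,n}$ on the indeterminates (i.e., $x_{i,j}>x_{u,v}$ iff $i<u$, or $i=u$ and $j<v$). Then the set $$G=\{\,x_{i,k}x_{i,j}-x_{i,j}x_{j,k}+x_{i,k}x_{j,k}+\beta x_{i,k}+\alpha \ \mid\ 1\le i<j<k\le n\,\}$$ is a Gröbner basis of the ideal $\mathcal{J}$ of $\mathcal{X}$ with respect to this order.
   Context: Let $\mathbf{k}$ be a commutative ring, $\beta,\alpha\in\mathbf{k}$, $n$ a positive integer. Let $\mathcal{X}=\mathbf{k}[x_{i,j}\mid 1\le i<j\le n]$ be the polynomial ring in the indeterminates $x_{i,j}$, $\mathfrak{M}$ its set of monomials, and $\mathcal{J}$ the ideal generated by all $x_{i,j}x_{j,k}-x_{i,k}(x_{i,j}+x_{j,k}+\beta)-\alpha$ for $1\le i<j<k\le n$. Inverse lexicographic order determined by a total order on the indeterminates: for monomials $\mathfrak{m}=\prod\xi^{m_\xi}$, $\mathfrak{n}=\prod\xi^{n_\xi}$, $\mathfrak{m}\le\mathfrak{n}$ iff $\mathfrak{m}=\mathfrak{n}$ or the largest indeterminate $\xi$ with $m_\xi\neq n_\xi$ has $m_\xi<n_\xi$. For nonzero $f$, the head term $\operatorname{HT}(f)$ is the largest monomial with nonzero coefficient in $f$; $f$ is monic if that coefficient is $1$. For a set $G$ of monic polynomials, write $f\underset{G}{\longrightarrow}g$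 if there exist $p\in G$ and monomials $\mathfrak{t},\mathfrak{s}$ such that the coefficient $a$ of $\mathfrak{t}$ in $f$ is nonzero, $\mathfrak{s}\operatorname{HT}(p)=\mathfrak{t}$, and $g=f-a\,\mathfrak{s}\,p$; let $\overset{*}{\underset{G}{\longrightarrow}}$ be its reflexive-transitive closure. A set $G$ of monic polynomials is a Gröbner basis of an ideal $\mathcal{I}$ if $G$ generates $\mathcal{I}$ and every $p\in\mathcal{I}$ satisfies $p\overset{*}{\underset{G}{\longrightarrow}}0$ (equivalently, every polynomial reduces via $\overset{*}{\underset{G}{\longrightarrow}}$ to a unique polynomial that is a $\mathbf{k}$-linear combination of monomials not divisible by any $\operatorname{HT}(g)$, $g\in G$). *)

From HB Require Import structures.
From mathcomp Require Import all_boot all_order all_algebra.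
Set Implicit Arguments. Unset Strict Implicit. Unset Printing Implicit Defensive.
Import GRing.Theory.
Local Open Scope ring_scope.

Section Poly.
Variable R : comNzRingType.
Variable n : nat.

(* indeterminates x_{i,j}, 0 <= i < j < n  (0-based indices) *)
Definition var := {p : 'I_n * 'I_n | (p.1 < p.2)%N}.
Definition mkvar (i j : 'I_n) (h : (i < j)%N) : var := exist _ (i, j) h.

Definition var_gt (a b : var) : bool :=
  ((val a).1 < (val b).1)%N ||
  (((val a).1 == (val b).1) && ((val a).2 < (val b).2)%N).

Definition mono := {ffun var -> nat}.
Definition mono1 : mono := [ffun _ => 0%N].
Definition monoX (a : var) : mono := [ffun v => nat_of_bool (v == a)].
Definition monoM (m1 m2 : mono) : mono := [ffun v => (m1 v + m2 v)%N].

(* inverse lexicographic order: m <= m' iff m = m' or the largest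
   indeterminate where the exponents differ has smaller exponent in m *)
Definition mono_le (m m' : mono) : Prop :=
  m = m' \/ exists xi : var, (m xi < m' xi)%N /\
             forall eta : var, var_gt eta xi -> m eta = m' eta.

(* polynomials = coefficient functions on monomials
   (only finitely supported ones ever arise below) *)
Definition poly := mono -> R.
Definition p0 : poly := fun _ => 0.
Definition pC (c : R) : poly := fun t => if t == mono1 then c else 0.
Definition pM (m : mono) : poly := fun t => if t == m then 1 else 0.
Definition padd (p q : poly) : poly := fun t => p t + q t.
Definition psub (p q : poly) : poly := fun t => p t - q t.
(* a * s * p for a scalar a and a monomial s *)
Definition pterm_mul (a : R) (s : mono) (p : poly) : poly :=
  fun t => if [forall v, (s v <= t v)%N]
           then a * p [ffun v => (t v - s v)%N] else 0.

Definition is_HT (p : poly) (h : mono) : Prop :=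
  p h != 0 /\ forall t, p t != 0 -> mono_le t h.
Definition monic (p : poly) : Prop := exists h, is_HT p h /\ p h = 1.

Inductive in_ideal (S : poly -> Prop) : poly -> Prop :=
| in_ideal0 : in_ideal S p0
| in_ideal_step (a : R) (s : mono) (g p : poly) :
    S g -> in_ideal S p -> in_ideal S (padd p (pterm_mul a s g)).

Definition red1 (G : poly -> Prop) (f g : poly) : Prop :=
  exists (p : poly) (t s : mono), G p /\ f t != 0 /\
    (exists h, is_HT p h /\ monoM s h = t) /\
    g = psub f (pterm_mul (f t) s p).

Inductive red_star (G : poly -> Prop) : poly -> poly -> Prop :=
| red_refl f : red_star G f f
| red_step f g h : red1 G f g -> red_star G g h -> red_star G f h.

Definition groebner_basis (G I : poly -> Prop) : Prop :=
  (forall g, G g -> monic g) /\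
  (forall p, in_ideal G p <-> I p) /\
  (forall p, I p -> red_star G p p0).

Definition pXX (a b : var) : poly := pM (monoM (monoX a) (monoX b)).
Definition pX (a : var) : poly := pM (monoX a).

Variables beta alpha : R.

Definition genJ (i j k : 'I_n) (hij : (i < j)%N) (hjk : (j < k)%N) : poly :=
  let xij := mkvar hij in let xjk := mkvar hjk in
  let xik := mkvar (ltn_trans hij hjk) in
  psub (psub (psub (psub (pXX xij xjk) (pXX xik xij)) (pXX xik xjk))
             (pterm_mul beta mono1 (pX xik))) (pC alpha).

Definition genG (i j k : 'I_n) (hij : (i < j)%N) (hjk : (j < k)%N) : poly :=
  let xij := mkvar hij in let xjk := mkvar hjk in
  let xik := mkvar (ltn_trans hij hjk) in
  padd (padd (padd (psub (pXX xik xij) (pXX xij xjk)) (pXX xik xjk))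
             (pterm_mul beta mono1 (pX xik))) (pC alpha).

Definition Jgens (p : poly) : Prop :=
  exists (i j k : 'I_n) (hij : (i < j)%N) (hjk : (j < k)%N), p = genJ hij hjk.
Definition Jideal : poly -> Prop := in_ideal Jgens.
Definition Gset (p : poly) : Prop :=
  exists (i j k : 'I_n) (hij : (i < j)%N) (hjk : (j < k)%N), p = genG hij hjk.

End Poly.

(* Bergman's diamond lemma for the rewriting system
     x_{ij} x_{ik} -> x_{ij} x_{jk} - x_{ik} x_{jk} - beta x_{ik} - alpha   (i < j < k),
   whose left-hand sides are the head terms of G.  Giving x_{ij} the weight n - i, each rule
   strictly lowers the weight of a monomial, so every monomial has a normal form [nf],
   computed by rewriting at an arbitrarily chosen head divisor.  By induction on the weight,
   rewriting at any other head divisor gives the same normal form: two disjoint head terms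
   commute, and the only genuine overlaps x_{ij} x_{ik} x_{il} (j < k < l) resolve by an
   explicit computation.  Extended linearly, [nf] therefore kills the ideal generated by G
   while fixing every polynomial supported on standard monomials, so a standard element of
   the ideal is zero.  Reduction modulo G terminates at a standard polynomial, which stays
   in the ideal; hence every element of the ideal reduces to 0. *)

From Pilot Require Import Defs.
From HB Require Import structures.
From mathcomp Require Import all_boot all_order all_algebra.
From mathcomp Require Import zify ring.
From Stdlib Require Import FunctionalExtensionality.
Set Implicit Arguments. Unset Strict Implicit. Unset Printing Implicit Defensive.
Import GRing.Theory.

Ltac perm_by_count := apply/permP => P /=; ring.

(** * Indeterminates and monomials *)

Section Monomials.
Variable n : nat.
Local Notation var := (var n).
Local Notation mono := (mono n).

Definition vrow (v : var) : nat := (val v).1.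
Definition vcol (v : var) : nat := (val v).2.

Lemma vrow_lt_vcol (v : var) : vrow v < vcol v.
Proof. exact: (valP v). Qed.

Lemma vcol_lt (v : var) : vcol v < n.
Proof. exact: ltn_ord. Qed.

Lemma var_inj (a b : var) : vrow a = vrow b -> vcol a = vcol b -> a = b.
Proof.
rewrite /vrow /vcol => ra ca; apply: val_inj; move: ra ca.
by case: (val a) (val b) => [i j] [i' j'] /= /val_inj -> /val_inj ->.
Qed.

(* x_a x_b with a = x_{ij}, b = x_{ik}, j < k: the head terms of G. *)
Definition head_pair (a b : var) : bool := (vrow a == vrow b) && (vcol a < vcol b).

(* x_{jk} for a = x_{ij} and b = x_{ik}. *)
Definition link (a b : var) : var := insubd a ((val a).2, (val b).2).

Lemma link_row_col (a b : var) :
  head_pair a b -> vrow (link a b) = vcol a /\ vcol (link a b) = vcol b.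
Proof. by case/andP=> _ ab; rewrite /vrow /vcol insubdK. Qed.

Lemma head_pair_neq (a b : var) : head_pair a b -> a != b.
Proof. by case/andP=> _; apply: contraTneq => ->; rewrite ltnn. Qed.

Lemma head_pair_trans (a b c : var) :
  head_pair a b -> head_pair b c -> head_pair a c.
Proof.
case/andP=> /eqP ab lab /andP[/eqP bc lbc].
by rewrite /head_pair ab bc eqxx (ltn_trans lab lbc).
Qed.

Definition mulX (d : mono) (s : seq var) : mono := [ffun v => d v + count_mem v s].
Definition divX (d : mono) (s : seq var) : mono := [ffun v => d v - count_mem v s].
Arguments mulX : simpl never.
Arguments divX : simpl never.

Lemma mulX_perm (d : mono) (s t : seq var) : perm_eq s t -> mulX d s = mulX d t.
Proof. by move=> /permP st; apply/ffunP => v; rewrite !ffunE st. Qed.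

Lemma mulX_nil (d : mono) : mulX d [::] = d.
Proof. by apply/ffunP => v; rewrite ffunE addn0. Qed.

Lemma mulX_cat (d : mono) (s t : seq var) : mulX (mulX d s) t = mulX d (s ++ t).
Proof. by apply/ffunP => v; rewrite !ffunE count_cat addnA. Qed.

Lemma mulXC (d : mono) (s t : seq var) : mulX (mulX d s) t = mulX (mulX d t) s.
Proof. by rewrite !mulX_cat; apply/mulX_perm; rewrite perm_catC. Qed.

Lemma mulXI (s : seq var) : injective (mulX ^~ s).
Proof.
move=> d d' /ffunP dd'; apply/ffunP => v.
by apply/(@addIn (count_mem v s)); have := dd' v; rewrite !ffunE.
Qed.

Lemma mulX_divX (d : mono) (s : seq var) :
  uniq s -> all (fun v => 0 < d v) s -> mulX (divX d s) s = d.
Proof.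
move=> us /allP ds; apply/ffunP => v; rewrite !ffunE count_uniq_mem //.
by case: (boolP (v \in s)) => [/ds|] /= vs; rewrite ?subnK ?subn0 ?addn0.
Qed.

Lemma mulX_gt0 (d : mono) (s : seq var) (v : var) : v \in s -> 0 < mulX d s v.
Proof. by move=> vs; rewrite ffunE addn_gt0 -has_count has_pred1 vs orbT. Qed.

Lemma mulX_notin (d : mono) (s : seq var) (v : var) : v \notin s -> mulX d s v = d v.
Proof. by move=> /count_memPn vs; rewrite ffunE vs addn0. Qed.

Lemma mulX_shared (d d' : mono) (s s' c c' : seq var) :
  mulX d s = mulX d' s' -> uniq c -> {subset c <= s'} -> all (fun v => v \notin s) c ->
  perm_eq (c ++ s) (c' ++ s') -> exists D, d = mulX D c /\ d' = mulX D c'.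
Proof.
move=> dd' uc cs' /allP cs p; exists (divX d c).
have Ed : d = mulX (divX d c) c.
  rewrite mulX_divX //; apply/allP => v vc.
  by rewrite -(mulX_notin d (cs v vc)) dd' mulX_gt0 // cs'.
by split=> //; apply: (@mulXI s'); rewrite -dd' {1}Ed !mulX_cat; apply: mulX_perm.
Qed.

Definition vweight (v : var) : nat := n - vrow v.
Definition sweight (s : seq var) : nat := \sum_(v <- s) vweight v.
Definition mweight (m : mono) : nat := \sum_v m v * vweight v.

Lemma sweight_cons (v : var) (s : seq var) : sweight (v :: s) = vweight v + sweight s.
Proof. by rewrite /sweight big_cons. Qed.

Lemma sweight_nil : sweight [::] = 0.
Proof. by rewrite /sweight big_nil. Qed.

Lemma mweight_mulX (d : mono) (s : seq var) : mweight (mulX d s) = mweight d + sweight s.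
Proof.
rewrite /mweight; under eq_bigr do rewrite ffunE mulnDl.
rewrite big_split /=; congr addn; elim: s => [|x s IHs].
  by rewrite sweight_nil big1 // => v _; rewrite mul0n.
under eq_bigr do rewrite /= mulnDl.
rewrite big_split /= IHs sweight_cons; congr addn.
by rewrite (bigD1 x) //= eqxx mul1n big1 ?addn0 // => v /negPf; rewrite eq_sym => ->.
Qed.

Lemma mulX_neq (d : mono) (s t : seq var) : sweight s < sweight t -> mulX d s != mulX d t.
Proof. by apply: contraTneq => st; rewrite -(ltn_add2l (mweight d)) -!mweight_mulX st ltnn. Qed.

Lemma vweight_gt0 (v : var) : 0 < vweight v.
Proof. by rewrite subn_gt0 (ltn_trans (vrow_lt_vcol v) (vcol_lt v)). Qed.

Lemma vweight_head_pair (a b : var) : head_pair a b -> vweight a = vweight b.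
Proof. by case/andP => /eqP ab _; rewrite /vweight ab. Qed.

Lemma vweight_link (a b : var) : head_pair a b -> vweight (link a b) < vweight a.
Proof.
move=> ab; have [r _] := link_row_col ab; have := vrow_lt_vcol a; have := vcol_lt a.
rewrite /vweight r; lia.
Qed.

End Monomials.

Section Rewriting.
Variable R : comNzRingType.
Variable n : nat.
Variables beta alpha : R.
Local Notation var := (var n).
Local Notation mono := (mono n).
Local Notation poly := (Defs.poly R n).
Local Notation Gset := (Gset beta alpha).
Local Open Scope ring_scope.

(** * Normal forms of monomials *)

(* The rewriting rule x_a x_b -> x_a x_e - x_b x_e - beta x_b - alpha, e = link a b. *)
Definition reduct_terms (a b : var) : seq (R * seq var) :=
  let e := link a b in
  [:: (1, [:: a; e]); (-1, [:: b; e]); (- beta, [:: b]); (- alpha, [::])].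

Lemma sweight_reduct_terms (a b : var) (x : R * seq var) :
  head_pair a b -> x \in reduct_terms a b -> (sweight x.2 < sweight [:: b; a])%N.
Proof.
move=> ab; have ea := vweight_link ab; have ba := vweight_head_pair ab.
have a0 := vweight_gt0 a.
rewrite !inE => /or4P[] /eqP -> /=; rewrite !sweight_cons sweight_nil; lia.
Qed.

Definition head_divisor (m : mono) : option (var * var) :=
  [pick ab : var * var | [&& head_pair ab.1 ab.2, (0 < m ab.1)%N & (0 < m ab.2)%N]].

Lemma head_divisorP (m : mono) (a b : var) : head_divisor m = Some (a, b) ->
  [/\ head_pair a b, (0 < m a)%N & (0 < m b)%N].
Proof. by rewrite /head_divisor; case: pickP => // -[x y] /and3P[? ? ?] [<- <-]. Qed.

Lemma head_divisor_None (m : mono) (a b : var) : head_divisor m = None ->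
  head_pair a b -> (0 < m a)%N -> (0 < m b)%N -> False.
Proof. by rewrite /head_divisor; case: pickP => // /(_ (a, b)) /= h _ ab ma mb; rewrite ab ma mb in h. Qed.

Lemma mulX_divX_head (m : mono) (a b : var) : head_divisor m = Some (a, b) ->
  mulX (divX m [:: b; a]) [:: b; a] = m.
Proof.
case/head_divisorP => ab ma mb; apply: mulX_divX => /=; last by rewrite ma mb.
by rewrite inE eq_sym (negPf (head_pair_neq ab)).
Qed.

Lemma mweight_reduct (m : mono) (a b : var) (x : R * seq var) :
  head_divisor m = Some (a, b) -> x \in reduct_terms a b ->
  (mweight (mulX (divX m [:: b; a]) x.2) < mweight m)%N.
Proof.
move=> hm hx; rewrite -{2}(mulX_divX_head hm) !mweight_mulX ltn_add2l.
by case/head_divisorP: hm => ab _ _; apply: sweight_reduct_terms.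
Qed.

(* Rewrites at the head divisor selected by [pick]; [nf_resolved] shows that the choice
   does not matter.  Any fuel above the weight suffices. *)
Fixpoint nf_fuel (k : nat) (m : mono) : poly :=
  if k is k'.+1 then
    if head_divisor m is Some (a, b) then
      fun u => \sum_(x <- reduct_terms a b) x.1 * nf_fuel k' (mulX (divX m [:: b; a]) x.2) u
    else pM R m
  else @p0 R n.

Lemma nf_fuel_enough (k1 k2 : nat) (m : mono) :
  (mweight m < k1)%N -> (mweight m < k2)%N -> nf_fuel k1 m =1 nf_fuel k2 m.
Proof.
elim: k1 k2 m => [|k1 IH] [|k2] m //= m1 m2 u.
case hm: (head_divisor m) => [[a b]|] //; apply: eq_big_seq => x hx.
by congr (_ * _); apply: IH; have := mweight_reduct hm hx; lia.
Qed.

Definition nf (m : mono) : poly := locked (nf_fuel (mweight m).+1 m).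

Lemma nfE (m : mono) : nf m = nf_fuel (mweight m).+1 m.
Proof. by rewrite /nf -lock. Qed.

Definition nf_reduct (d : mono) (a b : var) (u : mono) : R :=
  \sum_(x <- reduct_terms a b) x.1 * nf (mulX d x.2) u.

Lemma nf_unfold (m : mono) (u : mono) : nf m u =
  if head_divisor m is Some (a, b) then nf_reduct (divX m [:: b; a]) a b u else pM R m u.
Proof.
rewrite nfE /=; case hm: (head_divisor m) => [[a b]|] //.
apply: eq_big_seq => x hx; rewrite nfE; congr (_ * _).
by apply: nf_fuel_enough => //; apply: mweight_reduct hx.
Qed.

Lemma nf_standard (m u : mono) : head_divisor m = None -> nf m u = (u == m)%:R.
Proof. by move=> hm; rewrite nf_unfold hm /pM; case: eqP. Qed.

Lemma nf_reductE (d : mono) (a b : var) (u : mono) : nf_reduct d a b u =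
  nf (mulX d [:: a; link a b]) u - nf (mulX d [:: b; link a b]) u
  - beta * nf (mulX d [:: b]) u - alpha * nf d u.
Proof. by rewrite /nf_reduct !big_cons big_nil mulX_nil /=; ring. Qed.

(** * Confluence *)

Definition resolved (d : mono) (a b : var) : Prop :=
  forall u, nf (mulX d [:: b; a]) u = nf_reduct d a b u.

Section Overlaps.
Variable m : mono.
Hypothesis resolved_below : forall d a b, head_pair a b ->
  (mweight (mulX d [:: b; a]) < mweight m)%N -> resolved d a b.

Lemma overlap_disjoint (d : mono) (a b a' b' : var) (u : mono) :
  head_pair a b -> head_pair a' b' -> mulX (mulX d [:: b'; a']) [:: b; a] = m ->
  nf_reduct (mulX d [:: b; a]) a' b' u = nf_reduct (mulX d [:: b'; a']) a b u.
Proof.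
move=> ab ab' dm; rewrite /nf_reduct.
transitivity (\sum_(x <- reduct_terms a' b') x.1 *
  \sum_(y <- reduct_terms a b) y.1 * nf (mulX (mulX d x.2) y.2) u).
  apply: eq_big_seq => x hx; rewrite mulXC resolved_below // -dm !mweight_mulX.
  by have := sweight_reduct_terms ab' hx; lia.
transitivity (\sum_(y <- reduct_terms a b) y.1 *
  \sum_(x <- reduct_terms a' b') x.1 * nf (mulX (mulX d y.2) x.2) u); last first.
  apply: eq_big_seq => y hy; rewrite [in RHS]mulXC resolved_below // -dm.
  by have := sweight_reduct_terms ab hy; rewrite !mweight_mulX; lia.
under eq_bigr do rewrite mulr_sumr.
rewrite exchange_big /=; apply: eq_bigr => y _; rewrite mulr_sumr; apply: eq_bigr => x _.
by rewrite mulXC mulrCA.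
Qed.

(* The genuine overlaps: x_x x_y x_z with x, y, z in one row can be rewritten in three ways. *)
Section Chain.
Variables (d : mono) (u : mono) (x y z : var).
Hypotheses (xy : head_pair x y) (yz : head_pair y z).
Hypothesis dm : mulX d [:: x; y; z] = m.
Local Notation N s := (nf (mulX d s) u).

Lemma chain_step (p q tv : var) (t s1 s2 s3 s4 s5 : seq var) :
  head_pair p q -> link p q = tv -> (sweight (q :: p :: t) < sweight [:: x; y; z])%N ->
  perm_eq s1 (t ++ [:: q; p]) -> perm_eq s2 (t ++ [:: p; tv]) ->
  perm_eq s3 (t ++ [:: q; tv]) -> perm_eq s4 (t ++ [:: q]) -> perm_eq s5 t ->
  N s1 = N s2 - N s3 - beta * N s4 - alpha * N s5.
Proof.
move=> pq <- w p1 p2 p3 p4 p5.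
rewrite (mulX_perm d p1) (mulX_perm d p2) (mulX_perm d p3) (mulX_perm d p4).
rewrite (mulX_perm d p5) -!mulX_cat resolved_below ?nf_reductE // -dm !mweight_mulX.
by move: w; rewrite !sweight_cons sweight_nil; lia.
Qed.

Lemma chain_links :
  [/\ head_pair x z, head_pair (link x y) (link x z) & link (link x y) (link x z) = link y z].
Proof.
have xz := head_pair_trans xy yz.
set e := link x y; set f := link x z.
have [re ce] := link_row_col xy; have [rf cf] := link_row_col xz.
have [rg cg] := link_row_col yz.
have ef : head_pair e f by rewrite /head_pair re rf eqxx ce cf; case/andP: yz.
have [ref cef] := link_row_col ef.
by split => //; apply: var_inj; rewrite ?ref ?cef ?re ?rg ?cg ?cf.
Qed.

Lemma chain_weights : [/\ vweight y = vweight x, vweight z = vweight x,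
  (vweight (link x y) < vweight x)%N, (vweight (link x z) < vweight x)%N
  & (vweight (link y z) < vweight x)%N].
Proof.
have [xz _ _] := chain_links.
have wy := vweight_head_pair xy; have wz := vweight_head_pair yz.
by split; rewrite -?wz -?wy ?vweight_link // wy vweight_link.
Qed.

Tactic Notation "chain_by" constr(p) constr(q) constr(tv) constr(t) :=
  apply: (chain_step (p := p) (q := q) (tv := tv) (t := t)) => //;
  [rewrite !sweight_cons sweight_nil; lia | ..]; by perm_by_count.

Lemma chain_reducts :
  nf_reduct (mulX d [:: z]) x y u = nf_reduct (mulX d [:: y]) x z u /\
  nf_reduct (mulX d [:: z]) x y u = nf_reduct (mulX d [:: x]) y z u.
Proof.
have [xz ef efg] := chain_links; have [wy wz we wf wg] := chain_weights.
set e := link x y in ef efg we *; set f := link x z in ef efg wf *.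
set g := link y z in efg wg *.
have yz_zy : mulX d [:: y; z] = mulX d [:: z; y] by apply: mulX_perm; perm_by_count.
have E1 : N [:: z; x; e] = N [:: x; e; f] - N [:: z; e; f] - beta * N [:: z; e] - alpha * N [:: e].
  by chain_by x z f [:: e].
have E2 : N [:: x; e; f] = N [:: x; e; g] - N [:: x; f; g] - beta * N [:: x; f] - alpha * N [:: x].
  by chain_by e f g [:: x].
have E3 : N [:: z; e; f] = N [:: z; e; g] - N [:: z; f; g] - beta * N [:: z; f] - alpha * N [:: z].
  by chain_by e f g [:: z].
have E4 : N [:: z; y; e] = N [:: y; e; g] - N [:: z; e; g] - beta * N [:: z; e] - alpha * N [:: e].
  by chain_by y z g [:: e].
have E5 : N [:: z; y] = N [:: y; g] - N [:: z; g] - beta * N [:: z] - alpha * N (Nil var).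
  by chain_by y z g (Nil var).
have E6 : N [:: y; x; f] = N [:: x; e; f] - N [:: y; e; f] - beta * N [:: y; f] - alpha * N [:: f].
  by chain_by x y e [:: f].
have E7 : N [:: y; e; f] = N [:: y; e; g] - N [:: y; f; g] - beta * N [:: y; f] - alpha * N [:: y].
  by chain_by e f g [:: y].
have E8 : N [:: y; z; f] = N [:: y; f; g] - N [:: z; f; g] - beta * N [:: z; f] - alpha * N [:: f].
  by chain_by y z g [:: f].
have E9 : N [:: x; y; g] = N [:: x; e; g] - N [:: y; e; g] - beta * N [:: y; g] - alpha * N [:: g].
  by chain_by x y e [:: g].
have E10 : N [:: x; z; g] = N [:: x; f; g] - N [:: z; f; g] - beta * N [:: z; g] - alpha * N [:: g].
  by chain_by x z f [:: g].
have E11 : N [:: x; z] = N [:: x; f] - N [:: z; f] - beta * N [:: z] - alpha * N (Nil var).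
  by chain_by x z f (Nil var).
rewrite !nf_reductE !mulX_cat /= -/e -/f -/g yz_zy; clearbody e f g.
rewrite E1 E4 E5 E6 E8 E9 E10 E11 E2 E3 E7.
by split; ring.
Qed.

End Chain.

Lemma overlap_fork (d d' : mono) (a b c : var) (u : mono) :
  head_pair a b -> head_pair b c -> mulX d [:: b; a] = m -> mulX d' [:: c; a] = m ->
  nf_reduct d' a c u = nf_reduct d a b u.
Proof.
move=> ab bc dm d'm; have ac := head_pair_trans ab bc.
have [D [Ed Ed']] : exists D, d = mulX D [:: c] /\ d' = mulX D [:: b].
  apply: (mulX_shared (etrans dm (esym d'm))) => //.
  - by move=> v; rewrite inE => /eqP ->; rewrite mem_head.
  - by rewrite /= !inE negb_or eq_sym (head_pair_neq bc) eq_sym (head_pair_neq ac).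
  - by perm_by_count.
subst d d'; have dm' : mulX D [:: a; b; c] = m.
  by rewrite -dm mulX_cat; apply: mulX_perm; perm_by_count.
by have [-> _] := chain_reducts u ab bc dm'.
Qed.

Lemma overlap_join (d d' : mono) (a b c : var) (u : mono) :
  head_pair a b -> head_pair b c -> mulX d [:: c; a] = m -> mulX d' [:: c; b] = m ->
  nf_reduct d' b c u = nf_reduct d a c u.
Proof.
move=> ab bc dm d'm.
have [D [Ed Ed']] : exists D, d = mulX D [:: b] /\ d' = mulX D [:: a].
  apply: (mulX_shared (etrans dm (esym d'm))) => //.
  - by move=> v; rewrite inE => /eqP ->; rewrite !inE eqxx orbT.
  - by rewrite /= !inE negb_or (head_pair_neq bc) eq_sym (head_pair_neq ab).
  - by perm_by_count.
subst d d'; have dm' : mulX D [:: a; b; c] = m.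
  by rewrite -dm mulX_cat; apply: mulX_perm; perm_by_count.
by have [-> ->] := chain_reducts u ab bc dm'.
Qed.

Lemma overlap_path (d d' : mono) (a b c : var) (u : mono) :
  head_pair a b -> head_pair b c -> mulX d [:: b; a] = m -> mulX d' [:: c; b] = m ->
  nf_reduct d' b c u = nf_reduct d a b u.
Proof.
move=> ab bc dm d'm; have ac := head_pair_trans ab bc.
have [D [Ed Ed']] : exists D, d = mulX D [:: c] /\ d' = mulX D [:: a].
  apply: (mulX_shared (etrans dm (esym d'm))) => //.
  - by move=> v; rewrite inE => /eqP ->; rewrite mem_head.
  - by rewrite /= !inE negb_or eq_sym (head_pair_neq bc) eq_sym (head_pair_neq ac).
  - by perm_by_count.
subst d d'; have dm' : mulX D [:: a; b; c] = m.
  by rewrite -dm mulX_cat; apply: mulX_perm; perm_by_count.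
by have [_ ->] := chain_reducts u ab bc dm'.
Qed.

Lemma overlap_resolved (d d' : mono) (a b a' b' : var) (u : mono) :
  head_pair a b -> head_pair a' b' -> mulX d [:: b; a] = m -> mulX d' [:: b'; a'] = m ->
  nf_reduct d' a' b' u = nf_reduct d a b u.
Proof.
move=> ab ab' dm d'm.
have [/eqP rab _] := andP ab; have [/eqP rab' _] := andP ab'.
have hp (p q : var) : vrow p = vrow q -> (vcol p < vcol q)%N -> head_pair p q.
  by move=> pq lt; rewrite /head_pair pq eqxx.
case: (eqVneq a' a) => [ea | a'a]; case: (eqVneq b' b) => [eb | b'b].
- by subst a' b'; rewrite (mulXI (etrans d'm (esym dm))).
- subst a'; case: (ltngtP (vcol b) (vcol b')) => bb'.
  + exact: overlap_fork u ab (hp _ _ (etrans (esym rab) rab') bb') dm d'm.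
  + by rewrite (overlap_fork u ab' (hp _ _ (etrans (esym rab') rab) bb') d'm dm).
  + by case/eqP: b'b; apply: var_inj; rewrite // -rab -rab'.
- subst b'; case: (ltngtP (vcol a) (vcol a')) => aa'.
  + exact: overlap_join u (hp _ _ (etrans rab (esym rab')) aa') ab' dm d'm.
  + by rewrite (overlap_join u (hp _ _ (etrans rab' (esym rab)) aa') ab d'm dm).
  + by case/eqP: a'a; apply: var_inj; rewrite // rab rab'.
case: (eqVneq a' b) => [a'b | a'b]; first by subst a'; apply: overlap_path u ab ab' dm d'm.
case: (eqVneq b' a) => [b'a | b'a]; first by subst b'; rewrite (overlap_path u ab' ab d'm dm).
have [D [Ed Ed']] : exists D, d = mulX D [:: b'; a'] /\ d' = mulX D [:: b; a].
  apply: (mulX_shared (etrans dm (esym d'm))) => //.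
  - by rewrite /= inE eq_sym (head_pair_neq ab').
  - by rewrite /= !inE !negb_or b'b b'a a'b a'a.
  - by rewrite perm_catC.
by subst d d'; apply: overlap_disjoint.
Qed.

End Overlaps.

Lemma nf_resolved (d : mono) (a b : var) : head_pair a b -> resolved d a b.
Proof.
move: {2}(mweight (mulX d [:: b; a])).+1 (ltnSn (mweight (mulX d [:: b; a]))) => W.
elim: W d a b => // W IH d a b lt ab u; rewrite nf_unfold.
case hm: (head_divisor _) => [[a' b']|].
  case/head_divisorP: (hm) => ab' _ _; apply: (overlap_resolved (m := mulX d [:: b; a])) => //.
  - by move=> D x y xy lt'; apply: IH => //; apply: leq_trans lt' lt.
  - exact: mulX_divX_head.
by case: (head_divisor_None hm ab); apply: mulX_gt0; rewrite !inE eqxx ?orbT.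
Qed.

(** * Linear combinations, the generators and the ideal *)

Lemma mulX1E (s : seq var) (v : var) : mulX (mono1 n) s v = count_mem v s.
Proof. by rewrite ffunE ffunE. Qed.

Lemma monoM_mulX1 (d : mono) (s : seq var) : monoM d (mulX (mono1 n) s) = mulX d s.
Proof. by apply/ffunP => v; rewrite !ffunE. Qed.

Definition comb (L : seq (R * mono)) : poly := fun t => \sum_(x <- L) x.1 * (t == x.2)%:R.

Lemma comb_cat (L L' : seq (R * mono)) (t : mono) : comb (L ++ L') t = comb L t + comb L' t.
Proof. exact: big_cat. Qed.

Lemma comb_notin (L : seq (R * mono)) (t : mono) : t \notin map snd L -> comb L t = 0.
Proof.
move=> tL; rewrite /comb big_seq big1 // => x xL.
by case: eqP => [tx|]; [case/negP: tL; rewrite tx map_f | rewrite mulr0].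
Qed.

Lemma comb_support (L : seq (R * mono)) (t : mono) : comb L t != 0 -> t \in map snd L.
Proof. by apply: contraR => /comb_notin ->. Qed.

Lemma pterm_mul_comb (c : R) (s : mono) (L : seq (R * mono)) (t : mono) :
  pterm_mul c s (comb L) t = comb [seq (c * x.1, monoM s x.2) | x <- L] t.
Proof.
rewrite /pterm_mul /comb big_map mulr_sumr; case: forallP => [st | nst].
  apply: eq_bigr => x _; rewrite mulrA; congr (_ * _%:R); congr nat_of_bool.
  apply/eqP/eqP => /ffunP tx; apply/ffunP => v; have := tx v; rewrite !ffunE;
    have := st v; move: (t v) (s v) (x.2 v) => T S X; lia.
rewrite big1 // => x _; case: eqP => [tx|]; last by rewrite mulr0.
by case: nst => v; rewrite tx ffunE leq_addr.
Qed.

Definition nf_comb (L : seq (R * mono)) (u : mono) : R := \sum_(x <- L) x.1 * nf x.2 u.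

Lemma nf_comb_cat (L L' : seq (R * mono)) (u : mono) :
  nf_comb (L ++ L') u = nf_comb L u + nf_comb L' u.
Proof. exact: big_cat. Qed.

Definition standard (f : poly) : Prop := forall t, f t != 0 -> head_divisor t = None.

Lemma standard_nf_comb (f : poly) (L : seq (R * mono)) :
  f =1 comb L -> standard f -> f =1 nf_comb L.
Proof.
move=> fL fs u.
have -> : nf_comb L u = \sum_(t <- undup (map snd L)) comb L t * nf t u.
  rewrite /comb; under [RHS]eq_bigr do rewrite mulr_suml.
  rewrite exchange_big /=; apply: eq_big_seq => x xL.
  rewrite (big_rem x.2) ?mem_undup ?map_f //= eqxx mulr1 big_seq big1 ?addr0 // => t.
  by rewrite mem_rem_uniq ?undup_uniq // inE => /andP[/negPf -> _]; rewrite mulr0 mul0r.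
rewrite (eq_big_seq (fun t => (t == u)%:R * f t)); last first.
  move=> t _; rewrite -fL; have [->|/fs ts] := eqVneq (f t) 0; first by rewrite !mulr0 mul0r.
  by rewrite nf_standard // mulrC eq_sym.
have [uL|uL] := boolP (u \in undup (map snd L)).
  by rewrite (big_rem u) //= eqxx mul1r big_seq big1 ?addr0 // => t;
    rewrite mem_rem_uniq ?undup_uniq // inE => /andP[/negPf -> _]; rewrite mul0r.
rewrite fL comb_notin; last by rewrite -mem_undup.
rewrite big_seq big1 // => t tL.
by case: eqP => [tu|]; [move: uL; rewrite -tu tL | rewrite mul0r].
Qed.

(* x_b x_a - x_a x_e + x_b x_e + beta x_b + alpha, the element of G for a = x_{ij},
   b = x_{ik}, e = x_{jk}: the head term minus its reduct. *)
Definition gen_terms (a b : var) : seq (R * seq var) :=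
  (1, [:: b; a]) :: [seq (- x.1, x.2) | x <- reduct_terms a b].

Definition gen_comb (c : R) (s : mono) (a b : var) : seq (R * mono) :=
  [seq (c * x.1, mulX s x.2) | x <- gen_terms a b].

Definition gen (a b : var) : poly := comb (gen_comb 1 (mono1 n) a b).

Lemma pterm_mul_gen (c : R) (s : mono) (a b : var) (t : mono) :
  pterm_mul c s (gen a b) t = comb (gen_comb c s a b) t.
Proof.
rewrite pterm_mul_comb /gen_comb -map_comp; congr (comb _ t); apply: eq_map => x.
by rewrite /= mul1r monoM_mulX1.
Qed.

Lemma gen_comb_support (c : R) (s : mono) (a b : var) (t : mono) :
  t \in map snd (gen_comb c s a b) ->
  t = mulX s [:: b; a] \/ exists2 x, x \in reduct_terms a b & t = mulX s x.2.
Proof.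
rewrite /gen_comb -map_comp /gen_terms map_cons inE.
by case/orP => [/eqP ->|/mapP[_ /mapP[x xr ->] ->]]; [left | right; exists x].
Qed.

Lemma comb_gen_head (c : R) (s : mono) (a b : var) :
  head_pair a b -> comb (gen_comb c s a b) (mulX s [:: b; a]) = c.
Proof.
move=> ab; rewrite /comb /gen_comb big_map /gen_terms big_cons big_map /= eqxx !mulr1.
rewrite big_seq big1 ?addr0 // => x xr /=.
by rewrite eq_sym (negPf (mulX_neq _ (sweight_reduct_terms ab xr))) mulr0.
Qed.

Lemma nf_comb_gen (c : R) (s : mono) (a b : var) (u : mono) :
  head_pair a b -> nf_comb (gen_comb c s a b) u = 0.
Proof.
move=> ab; rewrite /nf_comb /gen_comb big_map /gen_terms big_cons big_map /=.
rewrite nf_resolved // /nf_reduct mulr_sumr -big_split /= big1 // => x _; ring.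
Qed.

Lemma link_mkvar (i j k : 'I_n) (hij : (i < j)%N) (hjk : (j < k)%N) :
  link (mkvar hij) (mkvar (ltn_trans hij hjk)) = mkvar hjk.
Proof. by apply: val_inj; rewrite /link insubdK. Qed.

Lemma head_pair_mkvar (i j k : 'I_n) (hij : (i < j)%N) (hjk : (j < k)%N) :
  head_pair (mkvar hij) (mkvar (ltn_trans hij hjk)).
Proof. by rewrite /head_pair /vrow /vcol /= eqxx. Qed.

Lemma monoXE (a : var) : monoX a = mulX (mono1 n) [:: a].
Proof. by apply/ffunP => v; rewrite !ffunE /= addn0 eq_sym. Qed.

Lemma monoXXE (a b : var) : monoM (monoX a) (monoX b) = mulX (mono1 n) [:: a; b].
Proof. by apply/ffunP => v; rewrite !ffunE /= addn0 !(eq_sym v). Qed.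

Lemma genGE (i j k : 'I_n) (hij : (i < j)%N) (hjk : (j < k)%N) :
  genG beta alpha hij hjk = gen (mkvar hij) (mkvar (ltn_trans hij hjk)).
Proof.
apply: functional_extensionality => t.
rewrite /gen /comb /gen_comb big_map /gen_terms big_cons big_map /reduct_terms link_mkvar.
rewrite !big_cons big_nil /genG /padd /psub /pXX /pX /pM /pterm_mul /pC.
rewrite !monoXXE monoXE /= mulX_nil.
have -> : [forall v, (mono1 n v <= t v)%N] by apply/forallP => v; rewrite ffunE.
have -> : [ffun v => (t v - mono1 n v)%N] = t by apply/ffunP => v; rewrite !ffunE subn0.
set a := mkvar hij; set b := mkvar (ltn_trans hij hjk); set e := mkvar hjk.
move: (mulX _ [:: b; a]) (mulX _ [:: a; e]) (mulX _ [:: b; e]) (mulX _ [:: b]) => m1 m2 m3 m4.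
by move: (mono1 n) => m5; do 5!case: (_ == _); rewrite /=; ring.
Qed.

Lemma Gset_gen (g : poly) : Gset g <-> exists a b, head_pair a b /\ g = gen a b.
Proof.
split=> [[i [j [k [hij [hjk ->]]]]] | [a [b [ab ->]]]].
  by exists (mkvar hij), (mkvar (ltn_trans hij hjk)); rewrite head_pair_mkvar genGE.
have hij := valP a; case/andP: (ab) => /eqP rab hjk.
exists (val a).1, (val a).2, (val b).2, hij, hjk; rewrite genGE.
have -> : mkvar hij = a by apply: val_inj => /=; case: (val a).
have -> // : mkvar (ltn_trans hij hjk) = b.
by apply: val_inj => /=; rewrite [RHS]surjective_pairing; congr pair; apply: val_inj.
Qed.

Lemma genJ_opp_genG (i j k : 'I_n) (hij : (i < j)%N) (hjk : (j < k)%N) (t : mono) :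
  genJ beta alpha hij hjk t = - genG beta alpha hij hjk t.
Proof.
rewrite /genJ /genG /padd /psub.
by move: (pXX _ _ _ t) (pXX _ _ _ t) (pXX _ _ _ t) (pterm_mul _ _ _ t) (pC _ t) => *; ring.
Qed.

Lemma pterm_mul_opp (c : R) (s : mono) (g g' : poly) :
  g =1 (fun t => - g' t) -> pterm_mul c s g = pterm_mul (- c) s g'.
Proof.
move=> gg'; apply: functional_extensionality => t; rewrite /pterm_mul.
by case: forallP => _ //; rewrite gg' mulrN mulNr.
Qed.

Lemma in_ideal_opp (S S' : poly -> Prop) (f : poly) :
  (forall g, S g -> exists2 g', S' g' & g =1 (fun t => - g' t)) ->
  in_ideal S f -> in_ideal S' f.
Proof.
move=> SS'; elim=> [|c s g p Sg _ IH]; first exact: in_ideal0.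
by have [g' S'g' gg'] := SS' g Sg; rewrite (pterm_mul_opp c s gg'); apply: in_ideal_step.
Qed.

Lemma ideal_Gset_Jideal (f : poly) : in_ideal Gset f <-> Jideal beta alpha f.
Proof.
split; apply: in_ideal_opp => _ [i [j [k [hij [hjk ->]]]]].
  by exists (genJ beta alpha hij hjk); [exists i, j, k, hij, hjk | move=> t; rewrite genJ_opp_genG opprK].
by exists (genG beta alpha hij hjk); [exists i, j, k, hij, hjk | apply: genJ_opp_genG].
Qed.

Lemma ideal_comb (f : poly) : in_ideal Gset f ->
  exists L, f =1 comb L /\ forall u, nf_comb L u = 0.
Proof.
elim=> [|c s g p /Gset_gen[a [b [ab ->]]] _ [L [pL nL]]].
  by exists [::]; split=> t; rewrite /comb /nf_comb big_nil.
exists (L ++ gen_comb c s a b); split=> t.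
  by rewrite /padd comb_cat -pL pterm_mul_gen.
by rewrite nf_comb_cat nL nf_comb_gen // addr0.
Qed.

Lemma ideal_standard_eq0 (f : poly) : in_ideal Gset f -> standard f -> f =1 @p0 R n.
Proof. by case/ideal_comb=> L [fL nL] fs u; rewrite (standard_nf_comb fL fs) nL. Qed.

(** * Head terms and termination of reduction *)

Lemma var_gtE (u v : var) :
  var_gt u v = (vrow u < vrow v)%N || (vrow u == vrow v) && (vcol u < vcol v)%N.
Proof. by []. Qed.

Lemma var_gt_head (a b eta : var) : head_pair a b -> var_gt eta a ->
  [&& a != eta, b != eta & link a b != eta].
Proof.
move=> ab; have [re _] := link_row_col ab; have := vrow_lt_vcol a.
case/andP: ab => /eqP rab cab ra; rewrite var_gtE => gt.
by apply/and3P; split; apply/eqP => E; move: gt; rewrite -E ?re -?rab; lia.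
Qed.

Lemma var_gt_tail (a b eta : var) : head_pair a b -> var_gt eta b ->
  (b != eta) && (link a b != eta).
Proof.
move=> ab; have [re _] := link_row_col ab; have := vrow_lt_vcol a.
case/andP: ab => /eqP rab cab ra; rewrite var_gtE => gt.
by apply/andP; split; apply/eqP => E; move: gt; rewrite -E ?re -?rab; lia.
Qed.

Lemma link_neq (a b : var) : head_pair a b -> (link a b != a) && (link a b != b).
Proof.
move=> ab; have [re _] := link_row_col ab; have := vrow_lt_vcol a.
case/andP: ab => /eqP rab _ ra.
by apply/andP; split; apply/eqP => E; move: re; rewrite E -?rab; lia.
Qed.

Lemma gen_tail_lt (a b : var) (x : R * seq var) : head_pair a b -> x \in reduct_terms a b ->
  mono_le (mulX (mono1 n) x.2) (mulX (mono1 n) [:: b; a]).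
Proof.
move=> ab; have /andP[/negPf ea /negPf eb] := link_neq ab.
have /negPf ab' := head_pair_neq ab; have ba : (b == a) = false by rewrite eq_sym.
rewrite !inE => /or4P[] /eqP -> /=; right.
- exists b; split; first by rewrite !mulX1E /= ab' eb eqxx.
  move=> eta /(var_gt_tail ab)/andP[/negPf bh /negPf eh].
  by rewrite !mulX1E /= bh eh; lia.
all: exists a; split; first by rewrite !mulX1E /= ?ba ?ea eqxx.
all: move=> eta /(var_gt_head ab)/and3P[/negPf ah /negPf bh /negPf eh].
all: by rewrite !mulX1E /= ?ah ?bh ?eh.
Qed.

Lemma gen_HT (a b : var) : head_pair a b ->
  is_HT (gen a b) (mulX (mono1 n) [:: b; a]) /\ gen a b (mulX (mono1 n) [:: b; a]) = 1.
Proof.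
move=> ab; have g1 : gen a b (mulX (mono1 n) [:: b; a]) = 1 by apply: comb_gen_head.
split=> //; split=> [|t]; first by rewrite g1 oner_neq0.
by move/comb_support/gen_comb_support => [->|[x xr ->]]; [left | apply: gen_tail_lt].
Qed.

Lemma red1_in_ideal (f g : poly) :
  red1 Gset f g -> in_ideal Gset f -> in_ideal Gset g.
Proof.
case=> p [t [s [Gp [_ [_ ->]]]]] If.
have -> : psub f (pterm_mul (f t) s p) = padd f (pterm_mul (- f t) s p).
  apply: functional_extensionality => u; rewrite /psub /padd /pterm_mul.
  by case: forallP => _; rewrite ?mulNr ?oppr0.
exact: in_ideal_step.
Qed.

Lemma red_star_in_ideal (f r : poly) :
  red_star Gset f r -> in_ideal Gset f -> in_ideal Gset r.
Proof. by elim=> // {}f g h fg _ IH If; apply/IH/(red1_in_ideal fg). Qed.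

Lemma reduce_step (f : poly) (t0 : mono) (a b : var) :
  f t0 != 0 -> head_divisor t0 = Some (a, b) ->
  exists g, [/\ red1 Gset f g, g t0 = 0 & exists2 N : seq mono,
    forall t, t \notin N -> g t = f t &
    forall t, t \in N -> t != t0 -> (mweight t < mweight t0)%N].
Proof.
move=> ft0 hd; have [ab _ _] := head_divisorP hd.
set s := divX t0 [:: b; a]; have st0 : mulX s [:: b; a] = t0 := mulX_divX_head hd.
set g := psub f (pterm_mul (f t0) s (gen a b)).
have gE t : g t = f t - comb (gen_comb (f t0) s a b) t by rewrite /g /psub pterm_mul_gen.
exists g; split.
- exists (gen a b), t0, s; split; first by apply/Gset_gen; exists a, b.
  split=> //; split=> //; exists (mulX (mono1 n) [:: b; a]).
  by have [? _] := gen_HT ab; rewrite monoM_mulX1.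
- by have := comb_gen_head (f t0) s ab; rewrite gE st0 => ->; rewrite subrr.
exists (map snd (gen_comb (f t0) s a b)) => t; first by move=> tN; rewrite gE comb_notin ?subr0.
case/gen_comb_support => [->|[x xr ->]]; first by rewrite st0 eqxx.
by rewrite -st0 !mweight_mulX ltn_add2l (sweight_reduct_terms ab xr).
Qed.

Definition supported (f : poly) (S : seq mono) : Prop := forall t, f t != 0 -> t \in S.

Definition weight_below (W : nat) (f : poly) : Prop :=
  forall t, f t != 0 -> head_divisor t != None -> (mweight t < W)%N.

Definition reduces_to_standard (f : poly) : Prop := exists2 r, red_star Gset f r & standard r.

Section TopWeight.
Variable W : nat.
Hypothesis reduce_below : forall f S, supported f S -> weight_below W f -> reduces_to_standard f.

(* Reducing at a top-weight monomial removes it and only introduces lighter ones. *)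
Lemma reduce_top_weight (L : seq mono) (f : poly) (S : seq mono) :
  supported f S -> weight_below W.+1 f ->
  (forall t, f t != 0 -> head_divisor t != None -> mweight t = W -> t \in L) ->
  reduces_to_standard f.
Proof.
elim: L f S => [|t0 L IHL] f S fS fW fL.
  apply: (reduce_below fS) => t ft ht; move: (fW t ft ht) (fL t ft ht).
  by rewrite ltnS leq_eqVlt => /orP[/eqP -> /(_ erefl)|].
have [ft0 | ft0] := eqVneq (f t0) 0.
  apply: (IHL f S) => // t ft ht wt; move: (fL t ft ht wt); rewrite inE.
  by case: eqVneq => [tt0|] //=; move: ft; rewrite tt0 ft0 eqxx.
case hd: (head_divisor t0) => [[a b]|].
  have [g [fg gt0 [N gN Nw]]] := reduce_step ft0 hd.
  have wt0 : (mweight t0 < W.+1)%N by apply: fW; rewrite ?hd.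
  have Nt0 t : g t != 0 -> t \in N -> (mweight t < mweight t0)%N.
    by move=> gt tN; apply: Nw => //; apply: contraNneq gt => ->; rewrite gt0.
  have [r gr rs] : reduces_to_standard g; last by exists r => //; apply: red_step fg gr.
  apply: (IHL g (S ++ N)).
  - move=> t gt; rewrite mem_cat; have [tN|tN] := boolP (t \in N); first by rewrite orbT.
    by rewrite fS // -gN.
  - move=> t gt ht; have [tN|tN] := boolP (t \in N); first exact: ltn_trans (Nt0 t gt tN) wt0.
    by apply: fW; rewrite // -gN.
  - move=> t gt ht wt; have [tN|tN] := boolP (t \in N).
      by move: (Nt0 t gt tN) wt0; rewrite wt ltnS => /leq_trans h /h; rewrite ltnn.
    have ft : f t != 0 by rewrite -gN.
    move: (fL t ft ht wt); rewrite inE; case: eqVneq => [tt0|] //= _.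
    by move: gt; rewrite tt0 gt0 eqxx.
apply: (IHL f S) => // t ft ht wt; move: (fL t ft ht wt); rewrite inE.
by case: eqVneq => [tt0|] //= _; move: ht; rewrite tt0 hd.
Qed.

End TopWeight.

Lemma reduce_to_standard (W : nat) (f : poly) (S : seq mono) :
  supported f S -> weight_below W f -> reduces_to_standard f.
Proof.
elim: W f S => [|W IHW] f S fS fW.
  exists f; first exact: red_refl.
  by move=> t ft; case hd: (head_divisor t) => //; have := fW t ft; rewrite hd => /(_ isT).
by apply: (reduce_top_weight IHW (L := S) fS) => // t ft _ _; apply: fS.
Qed.

End Rewriting.

Theorem proposition4p9 (R : comNzRingType) (beta alpha : R) (n : nat)
  (hn : (0 < n)%N) :
  groebner_basis (@Gset R n beta alpha) (@Jideal R n beta alpha).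
Proof.
split; [|split].
- move=> g /Gset_gen[a [b [ab ->]]]; exists (mulX (mono1 n) [:: b; a]); exact: gen_HT.
- exact: ideal_Gset_Jideal.
move=> p /ideal_Gset_Jideal Ip; have [L [pL _]] := ideal_comb Ip.
have pS : supported p (map snd L).
  by move=> t; rewrite pL; apply: contraR => /comb_notin ->; rewrite eqxx.
have pW : weight_below (\sum_(t <- map snd L) (mweight t).+1) p.
  by move=> t pt _; rewrite (big_rem t) ?pS //= leq_addr.
have [r pr rs] := reduce_to_standard beta alpha pS pW.
suff -> : @p0 R n = r by [].
by apply: functional_extensionality => u; rewrite (ideal_standard_eq0 (red_star_in_ideal pr Ip) rs).
Qed.
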